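(* Let $r_1<r_2$ be positive rational numbers such that neither $r_1$ nor $r_2$ is an integer and the open interval $(r_1,r_2)$ contains no integer. Let $w:=\lfloor r_1\rfloor$, $\epsilon_1:=r_1-w$, $\epsilon_2:=r_2-w$ (so $0<\epsilon_1<\epsilon_2<1$). Let $$d^*:=\min\{d\in\mathbb{Z}_{\ge1}:\ \exists m\in\mathbb{Z},\ r_1<m/d<r_2\},\qquad d_1:=\min\{e\in\mathbb{Z}_{\ge1}:\ (e/\epsilon_2,\,e/\epsilon_1)\cap\mathbb{Z}\neq\emptyset\}.$$ Then both minima exist, $d_1$ is the smallest positive integer denominator of a rational number in the interval $(1/\epsilon_2,1/\epsilon_1)$, and $$d^*=\left\lfloor \frac{d_1}{\epsilon_2}\right\rfloor+1,$$ i.e. $d^*=\lceil d_1/\epsilon_2\rceil$ if $d_1/\epsilon_2\notin\mathbb{Z}$ and $d^*=d_1/\epsilon_2+1$ if $d_1/\epsilon_2\in\mathbb{Z}$. *)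

From HB Require Import structures.
From mathcomp Require Import all_boot all_order all_algebra.
Set Implicit Arguments. Unset Strict Implicit. Unset Printing Implicit Defensive.
Import Order.TTheory GRing.Theory Num.Theory.
Local Open Scope ring_scope.

Definition is_min_pos (P : nat -> Prop) (d : nat) : Prop :=
  (0 < d)%N /\ P d /\ forall e : nat, (0 < e)%N -> P e -> (d <= e)%N.

Definition has_frac_with_den (a b : rat) (d : nat) : Prop :=
  exists m : int, a < m%:~R / d%:R /\ m%:~R / d%:R < b.

Definition scaled_interval_has_int (eps1 eps2 : rat) (e : nat) : Prop :=
  exists n : int, e%:R / eps2 < n%:~R /\ n%:~R < e%:R / eps1.

From HB Require Import structures.
From mathcomp Require Import all_boot all_order all_algebra.
From Stdlib Require Import Classical.
From mathcomp Require Import lra.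
Import Order.TTheory GRing.Theory Num.Theory.
Local Open Scope ring_scope.

(* Shifting by w = floor r1 turns a fraction m/d in (r1, r2) into a pair
   (d, m) with eps1 d < m < eps2 d.  This relation is symmetric in the sense
   that d lies in (m/eps2, m/eps1), so d1 is the least possible numerator m
   and d* the least possible denominator d.  For any admissible pair,
   m >= d1 and d > m/eps2 >= d1/eps2, whence d* >= floor(d1/eps2) + 1;
   conversely d = floor(d1/eps2) + 1 is admissible with m = d1, because it
   lies strictly above d1/eps2 and not above the integer witnessing d1,
   which itself lies below d1/eps1. *)

Lemma is_min_pos_exists (P : nat -> Prop) (d : nat) :
  (0 < d)%N -> P d -> exists d', is_min_pos P d'.
Proof.
elim/ltn_ind: d => d IH d_gt0 Pd.
case: (classic (exists2 e, (e < d)%N & (0 < e)%N /\ P e)).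
  by move=> [e lt_ed [e_gt0 Pe]]; exact: IH lt_ed e_gt0 Pe.
move=> no_smaller; exists d; do 2!split=> //.
move=> e e_gt0 Pe; rewrite leqNgt; apply/negP => lt_ed.
by apply: no_smaller; exists e.
Qed.

Lemma is_min_pos_equiv (P Q : nat -> Prop) (d : nat) :
  (forall e, (0 < e)%N -> P e <-> Q e) -> is_min_pos P d -> is_min_pos Q d.
Proof.
move=> PQ [d_gt0 [Pd d_min]]; split=> //; split; first by rewrite -PQ.
by move=> e e_gt0 Qe; apply: d_min; rewrite ?PQ.
Qed.

Definition frac_between (a b : rat) (d m : int) : bool :=
  a * d%:~R < m%:~R < b * d%:~R.

Lemma has_frac_with_denE (a b : rat) (d : nat) : (0 < d)%N ->
  has_frac_with_den a b d <-> exists m : int, frac_between a b d m.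
Proof.
move=> d_gt0; have d_pos : 0 < (d%:R : rat) by rewrite ltr0n.
split=> [[m [lt_am lt_mb]]|[m /andP[lt_am lt_mb]]]; exists m.
  by rewrite /frac_between -!pmulrn -ltr_pdivlMr // lt_am -ltr_pdivrMr.
by move: lt_am lt_mb; rewrite -!pmulrn => lt_am lt_mb; rewrite ltr_pdivlMr // ltr_pdivrMr.
Qed.

Lemma frac_between_subz (a b : rat) (w : int) (d : nat) :
  (exists m : int, frac_between (a - w%:~R) (b - w%:~R) d m) <->
  (exists m : int, frac_between a b d m).
Proof.
have shift m : (m - w * d)%:~R = m%:~R - w%:~R * (d%:R : rat).
  by rewrite rmorphB rmorphM.
rewrite /frac_between -!pmulrn.
split=> [[m /andP[lt_am lt_mb]]|[m /andP[lt_am lt_mb]]].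
  exists (m + w * d); rewrite rmorphD rmorphM /=.
  by move: lt_am lt_mb; rewrite !mulrBl => lt_am lt_mb; apply/andP; split; lra.
by exists (m - w * d); rewrite shift !mulrBl; apply/andP; split; lra.
Qed.

Lemma scaled_interval_has_intE (eps1 eps2 : rat) (e : nat) :
  0 < eps1 -> 0 < eps2 ->
  scaled_interval_has_int eps1 eps2 e <-> exists n : int, frac_between eps1 eps2 n e.
Proof.
move=> eps1_gt0 eps2_gt0; rewrite /frac_between -pmulrn.
split=> [[n [lt_en lt_ne]]|[n /andP[lt_ne lt_en]]]; exists n.
  by rewrite mulrC -ltr_pdivlMr // lt_ne mulrC -ltr_pdivrMr.
by rewrite ltr_pdivrMr // ltr_pdivlMr // mulrC lt_en mulrC.
Qed.

Lemma has_frac_with_den_inv (eps1 eps2 : rat) (e : nat) : (0 < e)%N ->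
  has_frac_with_den (1 / eps2) (1 / eps1) e <-> scaled_interval_has_int eps1 eps2 e.
Proof.
move=> e_gt0; rewrite has_frac_with_denE // /frac_between -pmulrn !mul1r.
by rewrite ![_^-1 * _]mulrC; split=> [[n /andP[]]|[n []]]; exists n => //; apply/andP.
Qed.

Section SlopeInterval.

Context {eps1 eps2 : rat}.
Hypotheses (eps1_gt0 : 0 < eps1) (eps12 : eps1 < eps2).

Let eps2_gt0 : 0 < eps2. Proof. exact: lt_trans eps12. Qed.

Lemma frac_between_num_gt0 {d m : int} :
  0 < d -> frac_between eps1 eps2 d m -> 0 < m.
Proof.
rewrite -(ltr0z rat) => d_gt0 /andP[lt_dm _].
by rewrite -(ltr0z rat); apply: lt_trans lt_dm; rewrite mulr_gt0.
Qed.

Lemma exists_min_numerator :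
  exists d1, is_min_pos (fun e : nat => exists n : int, frac_between eps1 eps2 n e) d1.
Proof.
have [eps1_lt_c c_lt_eps2] := midf_lt eps12.
set c := (eps1 + eps2) / 2 in eps1_lt_c c_lt_eps2.
have num_gt0 : 0 < numq c by rewrite numq_gt0 (lt_trans eps1_gt0).
apply: (@is_min_pos_exists _ `|numq c|%N); first by rewrite absz_gt0 gt_eqF.
have den_gt0 : (0 : rat) < (denq c)%:~R by rewrite ltr0z denq_gt0.
exists (denq c); rewrite /frac_between abszE ger0_norm ?ltW // numqE.
by rewrite !ltr_pM2r // eps1_lt_c.
Qed.

Lemma floor_num_div_lt {d m : int} :
  frac_between eps1 eps2 d m -> Num.floor (m%:~R / eps2) < d.
Proof. by move=> /andP[_ lt_md]; rewrite floor_lt_int ltr_pdivrMr // mulrC. Qed.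

Lemma frac_between_floor_succ {n m : int} :
  frac_between eps1 eps2 n m ->
  frac_between eps1 eps2 (Num.floor (m%:~R / eps2) + 1) m.
Proof.
move=> between_nm; set k := Num.floor _ + 1.
have le_kn : k%:~R <= n%:~R :> rat.
  by rewrite ler_int lezD1; exact: floor_num_div_lt between_nm.
apply/andP; split.
  by case/andP: between_nm => lt_nm _; apply: le_lt_trans lt_nm; rewrite ler_pM2l.
by rewrite mulrC -ltr_pdivrMr //; exact: floorD1_gt.
Qed.

Lemma min_denominator {d1 : nat} :
  is_min_pos (fun e : nat => exists n : int, frac_between eps1 eps2 n e) d1 ->
  is_min_pos (fun d : nat => exists m : int, frac_between eps1 eps2 d m)
    (absz (Num.floor (d1%:R / eps2) + 1)).
Proof.
move=> [d1_gt0 [[n between_nd1] d1_min]].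
set k := Num.floor _ + 1.
have k_gt0 : 0 < k by apply: ltr_pwDr; rewrite // floor_ge0 divr_ge0 // ltW.
have abs_k : Posz `|k|%N = k by rewrite abszE gtr0_norm.
split; first by rewrite -ltz_nat abs_k.
split; first by exists d1; rewrite abs_k; exact: frac_between_floor_succ between_nd1.
move=> d d_gt0 [m between_dm].
have m_gt0 : 0 < m by apply: frac_between_num_gt0 between_dm; rewrite ltz_nat.
have le_d1m : (d1 <= `|m|)%N.
  by apply: d1_min; [rewrite absz_gt0 gt_eqF | exists d; rewrite abszE gtr0_norm].
rewrite -lez_nat abs_k lezD1; apply: le_lt_trans (floor_num_div_lt between_dm).
apply: le_floor; rewrite ler_pM2r ?invr_gt0 //.
by rewrite -[m]gtr0_norm // -abszE -pmulrn ler_nat.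
Qed.

End SlopeInterval.

Theorem mainTheorem5 (r1 r2 : rat)
  (hr1 : 0 < r1) (hr12 : r1 < r2)
  (hr1nint : r1 \isn't a Num.int) (hr2nint : r2 \isn't a Num.int)
  (hnoint : forall z : int, ~ (r1 < z%:~R /\ z%:~R < r2)) :
  let w : int := Num.floor r1 in
  let eps1 : rat := r1 - w%:~R in
  let eps2 : rat := r2 - w%:~R in
  exists dstar d1 : nat,
    is_min_pos (has_frac_with_den r1 r2) dstar /\
    is_min_pos (scaled_interval_has_int eps1 eps2) d1 /\
    is_min_pos (has_frac_with_den (1 / eps2) (1 / eps1)) d1 /\
    (dstar%:R : int) = Num.floor (d1%:R / eps2) + 1.
Proof.
move=> w eps1 eps2.
have w_lt_r1 : w%:~R < r1.
  by rewrite lt_neqAle floor_le andbT; apply: contra hr1nint; rewrite intrEfloor.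
have eps1_gt0 : 0 < eps1 by rewrite /eps1; lra.
have eps12 : eps1 < eps2 by rewrite /eps1 /eps2; lra.
have eps2_gt0 : 0 < eps2 by lra.
have [d1 d1_min] := exists_min_numerator eps1_gt0 eps12.
have dstar_min := min_denominator eps1_gt0 eps12 d1_min.
exists (absz (Num.floor (d1%:R / eps2) + 1)), d1; split.
  apply: is_min_pos_equiv dstar_min => d d_gt0.
  by rewrite has_frac_with_denE //; exact: frac_between_subz.
have scaled_min : is_min_pos (scaled_interval_has_int eps1 eps2) d1.
  by apply: is_min_pos_equiv d1_min => e _; rewrite scaled_interval_has_intE.
split=> //; split.
  by apply: is_min_pos_equiv scaled_min => e e_gt0; rewrite has_frac_with_den_inv.
by rewrite natz abszE ger0_norm // addr_ge0 // floor_ge0 divr_ge0 // ltW.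
Qed.
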